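(* Let $d,k\ge1$, let $\pi(a|s)$ be a policy on actions $a\in\{0,\dots,k-1\}$ and states $s\in\{1,\dots,d\}$, and let $M=(M^a)_a$ be nonnegative $d\times d$ matrices with $\sum_{s'}M^a_{ss'}=\pi(a|s)$ for all $a,s$ and with $M^+:=\sum_aM^a$ entrywise strictly positive. Define the linear map $A'$ on $\Delta\in\mathbb{R}^{d\times d}$ by $$A'(\Delta)=\Big(\big(L_a(\Delta)\big)_{a},\ \big(\textstyle\sum_{s'}M^a_{ss'}\Delta_{ss'}\big)_{a,s}\Big),$$ where $$L_a(\Delta)=(M^aM^+)\odot\big[M^+(M^+\odot\Delta)+(M^+\odot\Delta)M^+\big]-\big[(M^a\odot\Delta)M^+ + M^a(M^+\odot\Delta)\big]\odot (M^+)^2 .$$ If $A'$ has full rank $d^2$ (i.e. $A'(\Delta)=0$ implies $\Delta=0$), then there exists $\varepsilon>0$ such that every family $W=(W^a)_a$ of nonnegative $d\times d$ matrices with $\sum_{s'}W^a_{ss'}=\pi(a|s)$ for all $a,s$, with $W^+:=\sum_aW^a$ entrywise strictly positive, with $\max_{a,s,s'}|W^a_{ss'}-M^a_{ss'}|<\varepsilon$, and satisfying $$M^a\oslash M^+=W^a\oslash W^+\quad\text{and}\quad M^aM^+\oslash(M^+)^2=W^aW^+\oslash(W^+)^2\qquad\text{for all } a,$$ is equal to $M$.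
   Context: $\odot$ and $\oslash$ denote entrywise multiplication and division of matrices; juxtaposition and $(M^+)^2=M^+M^+$ denote ordinary matrix products. $M^a_{ss'}$ represents $\pi(a|s)p(s'|s,a)$; the two displayed equations say that $W$ and $M$ have the same one-step inverse model $p(a|s,s')$ and the same two-step first-action inverse model $p(a|s,s'')$. $L_a(\Delta)$ is the part linear in $\Delta$ of $M^aM^+\odot(W^+)^2-W^aW^+\odot(M^+)^2$ when $W^a=M^a\odot(1+\Delta)$. *)

From mathcomp Require Import all_boot all_order all_algebra.
From mathcomp Require Import reals.
Set Implicit Arguments. Unset Strict Implicit. Unset Printing Implicit Defensive.
Import Order.TTheory GRing.Theory Num.Theory.
Local Open Scope ring_scope.

Section Defs.
Variables (R : realType) (d k : nat).

Definition emul (A B : 'M[R]_d) : 'M[R]_d := \matrix_(i, j) (A i j * B i j).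
Definition ediv (A B : 'M[R]_d) : 'M[R]_d := \matrix_(i, j) (A i j / B i j).

Definition Mplus (M : 'I_k -> 'M[R]_d) : 'M[R]_d := \sum_(a < k) M a.

Definition La (M : 'I_k -> 'M[R]_d) (a : 'I_k) (D : 'M[R]_d) : 'M[R]_d :=
  let P := Mplus M in
  emul (M a *m P) (P *m emul P D + emul P D *m P)
  - emul ((emul (M a) D) *m P + M a *m emul P D) (P *m P).

Definition Aprime (M : 'I_k -> 'M[R]_d) (D : 'M[R]_d)
  : {ffun 'I_k -> 'M[R]_d} * 'M[R]_(k, d) :=
  ([ffun a => La M a D], \matrix_(a, s) \sum_(s' < d) M a s s' * D s s').

Definition admissible (pi : 'I_k -> 'I_d -> R) (M : 'I_k -> 'M[R]_d) : Prop :=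
  (forall a s s', 0 <= M a s s') /\
  (forall a s, \sum_(s' < d) M a s s' = pi a s) /\
  (forall s s', 0 < Mplus M s s').

End Defs.

From HB Require Import structures.
From mathcomp Require Import all_boot all_order all_algebra.
From mathcomp Require Import reals.
From mathcomp Require Import ring lra.
Set Implicit Arguments. Unset Strict Implicit. Unset Printing Implicit Defensive.
Import Order.TTheory GRing.Theory Num.Theory.
Local Open Scope ring_scope.

(* Since W^a ⊘ W^+ = M^a ⊘ M^+, every W^a equals M^a ⊙ (1 + Δ) for the single
   matrix Δ := W^+ ⊘ M^+ - 1.  Cross-multiplying the two-step condition and
   substituting, its linear part in Δ is L_a(Δ) and the rest Q_a(Δ) is quadratic;
   equal row sums give Σ_s' M^a_ss' Δ_ss' = 0.  Hence A'(Δ) = (-Q(Δ), 0), so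
   injectivity of A' yields |Δ| <= C |A'(Δ)| <= C K |Δ|^2, while closeness of W
   to M makes |Δ| so small that this forces Δ = 0. *)

Section EntrywiseNorm.
Variable R : numDomainType.

Lemma ler_term_sum (I : finType) (F : I -> R) i :
  (forall j, 0 <= F j) -> F i <= \sum_j F j.
Proof. by move=> F_ge0; rewrite (bigD1 i) //= lerDl sumr_ge0. Qed.

Definition mnorm1 m n (A : 'M[R]_(m, n)) : R := \sum_i \sum_j `|A i j|.

Lemma mnorm1_ge0 m n (A : 'M[R]_(m, n)) : 0 <= mnorm1 A.
Proof. by do 2!(apply: sumr_ge0 => ? _). Qed.

Lemma norm_entry_le_mnorm1 m n (A : 'M[R]_(m, n)) i j : `|A i j| <= mnorm1 A.
Proof.
rewrite /mnorm1; apply: le_trans _ (ler_term_sum (F := fun i => \sum_j `|A i j|) i _).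
  exact: (ler_term_sum (F := fun j => `|A i j|)).
by move=> ?; apply: sumr_ge0.
Qed.

Lemma mnorm1_eq0 m n (A : 'M[R]_(m, n)) : mnorm1 A = 0 -> A = 0.
Proof.
move=> A0; apply/matrixP=> i j; rewrite mxE; apply/normr0_eq0/le_anti.
by rewrite normr_ge0 -A0 norm_entry_le_mnorm1.
Qed.

Lemma norm_mulmx_entry_le m n p (A : 'M[R]_(m, n)) (B : 'M[R]_(n, p)) i j :
  `|(A *m B) i j| <= mnorm1 A * mnorm1 B.
Proof.
rewrite mxE; apply: le_trans (ler_norm_sum _ _ _) _.
apply: (@le_trans _ _ (\sum_t mnorm1 A * `|B t j|)).
  by apply: ler_sum => t _; rewrite normrM ler_wpM2r ?norm_entry_le_mnorm1.
rewrite -mulr_sumr ler_wpM2l ?mnorm1_ge0 //; apply: ler_sum => t _.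
exact: (ler_term_sum (F := fun j => `|B t j|)).
Qed.

Lemma mulmx_gt0 n (A B : 'M[R]_n) i j :
  (forall i j, 0 < A i j) -> (forall i j, 0 < B i j) -> 0 < (A *m B) i j.
Proof.
move=> A_gt0 B_gt0; rewrite mxE (bigD1 i) //= ltr_pwDl ?mulr_gt0 //.
by apply: sumr_ge0 => t _; rewrite mulr_ge0 ?ltW.
Qed.

End EntrywiseNorm.

Section Hadamard.
Variables (R : realType) (n : nat).
Implicit Types (A B C E D : 'M[R]_n).

Lemma emulDl A B D : emul (A + B) D = emul A D + emul B D.
Proof. by apply/matrixP=> i j; rewrite !mxE mulrDl. Qed.

Lemma emulDr A B D : emul A (B + D) = emul A B + emul A D.
Proof. by apply/matrixP=> i j; rewrite !mxE mulrDr. Qed.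

Lemma emulZl c A D : emul (c *: A) D = c *: emul A D.
Proof. by apply/matrixP=> i j; rewrite !mxE mulrA. Qed.

Lemma emulZr c A D : emul A (c *: D) = c *: emul A D.
Proof. by apply/matrixP=> i j; rewrite !mxE mulrCA. Qed.

Lemma emulr0 A : emul A 0 = 0.
Proof. by apply/matrixP=> i j; rewrite !mxE mulr0. Qed.

Lemma mnorm1_emul_le A D (del : R) :
  (forall i j, `|D i j| <= del) -> mnorm1 (emul A D) <= mnorm1 A * del.
Proof.
move=> D_le; rewrite /mnorm1 mulr_suml; apply: ler_sum => i _.
rewrite mulr_suml; apply: ler_sum => j _.
by rewrite mxE normrM ler_wpM2l.
Qed.

Lemma norm_mulmx_emul_entry_le A B D (del : R) i j :
  (forall i j, `|D i j| <= del) ->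
  `|(emul A D *m emul B D) i j| <= mnorm1 A * mnorm1 B * del ^+ 2.
Proof.
move=> D_le; apply: le_trans (norm_mulmx_entry_le _ _ i j) _.
have -> : mnorm1 A * mnorm1 B * del ^+ 2 = (mnorm1 A * del) * (mnorm1 B * del).
  by ring.
by apply: ler_pM; rewrite ?mnorm1_ge0 ?mnorm1_emul_le.
Qed.

Lemma ediv_eq_emul A B C E :
  (forall i j, B i j != 0) -> (forall i j, E i j != 0) ->
  ediv A B = ediv C E -> emul A E = emul C B.
Proof.
move=> B_neq0 E_neq0 /matrixP AB_CE; apply/matrixP=> i j; rewrite !mxE.
have := AB_CE i j; rewrite !mxE => /eqP.
by rewrite eqr_div // => /eqP.
Qed.

End Hadamard.

Section LinearLowerBound.
Variable R : realFieldType.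

Lemma linear_lower_bound m n p (f : 'M[R]_(m, n) -> 'rV[R]_p) :
  linear f -> (forall A, f A = 0 -> A = 0) ->
  exists C, 0 <= C /\
    forall A c, 0 <= c -> (forall i, `|f A 0 i| <= c) -> mnorm1 A <= C * c.
Proof.
move=> f_lin f_inj.
pose g x := f (vec_mx x).
have g_lin : linear g by move=> a u v; rewrite /g linearP f_lin.
pose gL : {linear 'rV[R]_(m * n) -> 'rV[R]_p} :=
  HB.pack g (GRing.isLinear.Build _ _ _ _ g g_lin).
have gE x : x *m lin1_mx gL = f (vec_mx x) by rewrite mul_rV_lin1.
have /row_freeP[B gB] : row_free (lin1_mx gL).
  by apply: inj_row_free => x; rewrite gE => /f_inj x0; rewrite -[x]vec_mxK x0 linear0.
exists ((m * n)%:R * mnorm1 B); split; first by rewrite mulr_ge0 ?mnorm1_ge0.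
move=> A c c0 fA_le.
have mxvecA : mxvec A = f A *m B.
  by rewrite -{2}[A]mxvecK -gE -mulmxA gB mulmx1.
have A_le i j : `|A i j| <= c * mnorm1 B.
  rewrite -mxvecE mxvecA mxE; apply: le_trans (ler_norm_sum _ _ _) _.
  apply: (@le_trans _ _ (\sum_l c * `|B l (mxvec_index i j)|)).
    by apply: ler_sum => l _; rewrite normrM ler_wpM2r.
  rewrite -mulr_sumr ler_wpM2l //; apply: ler_sum => l _.
  exact: (ler_term_sum (F := fun j => `|B l j|)).
apply: (@le_trans _ _ (\sum_(i < m) \sum_(j < n) c * mnorm1 B)).
  by rewrite /mnorm1; apply: ler_sum => i _; apply: ler_sum => j _; apply: A_le.
by rewrite !sumr_const !card_ord -mulrnA -mulrA mulr_natl [(n * m)%N]mulnC [c * _]mulrC.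
Qed.

End LinearLowerBound.

Section Linearization.
Variables (R : realType) (d k : nat) (M : 'I_k -> 'M[R]_d).
Implicit Types (D E : 'M[R]_d).

Lemma La_linear a c D E : La M a (c *: D + E) = c *: La M a D + La M a E.
Proof.
rewrite /La !(emulDr, emulZr, emulDl, emulZl, mulmxDl, mulmxDr, =^~ scalemxAl, =^~ scalemxAr).
by apply/matrixP=> i j; rewrite !mxE; ring.
Qed.

Definition Aprime_vec D : 'rV[R]_(k * (d * d) + k * d) :=
  row_mx (mxvec (\matrix_(a, j) mxvec ((Aprime M D).1 a) 0 j)) (mxvec (Aprime M D).2).

Lemma Aprime_vec_linear : linear Aprime_vec.
Proof.
move=> c D E; rewrite /Aprime_vec scale_row_mx add_row_mx -!linearZ -!linearD /=.
congr row_mx; congr mxvec; apply/matrixP=> i j; rewrite !mxE.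
  by rewrite !ffunE La_linear linearP /= !mxE.
by rewrite mulr_sumr -big_split; apply: eq_bigr => s _ /=; rewrite !mxE; ring.
Qed.

Lemma Aprime_vec_eq0 D : Aprime_vec D = 0 -> Aprime M D = (0, 0).
Proof.
move/eqP; rewrite row_mx_eq0 !mxvec_eq0 => /andP[/eqP La0 /eqP rows0].
rewrite [Aprime M D]surjective_pairing rows0; congr pair.
apply/ffunP=> a; apply/matrixP=> i j.
have /matrixP/(_ a (mxvec_index i j)) := La0.
by rewrite [in X in X -> _]mxE mxvecE => ->; rewrite ffunE !mxE.
Qed.

Lemma Aprime_vec_entry_le D c :
  0 <= c -> (forall a s s', `|La M a D s s'| <= c) ->
  (forall a s, \sum_(s' < d) M a s s' * D s s' = 0) ->
  forall i, `|Aprime_vec D 0 i| <= c.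
Proof.
move=> c0 La_le rows0 i; rewrite /Aprime_vec -(splitK i); case: (split i) => j /=.
  rewrite row_mxEl; case/mxvec_indexP: j => a ss'; rewrite mxvecE mxE.
  by case/mxvec_indexP: ss' => s s'; rewrite mxvecE ffunE.
by rewrite row_mxEr; case/mxvec_indexP: j => a s; rewrite mxvecE mxE rows0 normr0.
Qed.

Definition Qa a D : 'M[R]_d :=
  let P := Mplus M in
  emul (M a *m P) (emul P D *m emul P D) - emul (emul (M a) D *m emul P D) (P *m P).

Lemma La_add_Qa a D Wa Wp :
  Wa = M a + emul (M a) D -> Wp = Mplus M + emul (Mplus M) D ->
  La M a D + Qa a D
  = emul (M a *m Mplus M) (Wp *m Wp) - emul (Wa *m Wp) (Mplus M *m Mplus M).
Proof.
move=> -> ->; rewrite /La /Qa.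
rewrite !(emulDr, emulDl, mulmxDl, mulmxDr).
by apply/matrixP=> i j; rewrite !mxE; ring.
Qed.

Lemma Qa_quadratic_bound :
  exists K, 0 <= K /\ forall D (del : R), (forall s t, `|D s t| <= del) ->
    forall a s s', `|Qa a D s s'| <= K * del ^+ 2.
Proof.
pose P := Mplus M.
exists (2 * (\sum_a mnorm1 (M a)) * mnorm1 P ^+ 3).
have sum_ge0 : 0 <= \sum_a mnorm1 (M a) by apply: sumr_ge0 => a _; apply: mnorm1_ge0.
split; first by rewrite !mulr_ge0 ?exprn_ge0 ?mnorm1_ge0.
move=> D del D_le a s s'.
have := norm_mulmx_emul_entry_le (M a) P s s' D_le.
have := norm_mulmx_emul_entry_le P P s s' D_le.
have := norm_mulmx_entry_le (M a) P s s'.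
have := norm_mulmx_entry_le P P s s'.
have -> : Qa a D s s' = (M a *m P) s s' * (emul P D *m emul P D) s s'
                        - (emul (M a) D *m emul P D) s s' * (P *m P) s s'.
  by rewrite /Qa !mxE.
move=> y2_le y1_le x2_le x1_le.
apply: le_trans (ler_normB _ _) _; rewrite !normrM.
apply: (@le_trans _ _ (2 * mnorm1 (M a) * mnorm1 P ^+ 3 * del ^+ 2)).
  have -> : 2 * mnorm1 (M a) * mnorm1 P ^+ 3 * del ^+ 2
          = mnorm1 (M a) * mnorm1 P * (mnorm1 P * mnorm1 P * del ^+ 2)
            + mnorm1 (M a) * mnorm1 P * del ^+ 2 * (mnorm1 P * mnorm1 P) by ring.
  by apply: lerD; apply: ler_pM.
have Ma_le : mnorm1 (M a) <= \sum_a mnorm1 (M a).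
  by apply: (ler_term_sum (F := fun a => mnorm1 (M a))) => b; apply: mnorm1_ge0.
by rewrite ler_wpM2r ?sqr_ge0 // ler_wpM2r ?exprn_ge0 ?mnorm1_ge0 // ler_wpM2l.
Qed.

End Linearization.

Section Deviation.
Variables (R : realType) (d k : nat) (pi : 'I_k -> 'I_d -> R).
Variables (M W : 'I_k -> 'M[R]_d).
Hypotheses (M_adm : admissible pi M) (W_adm : admissible pi W).
Hypothesis ratio_eq : forall a, ediv (M a) (Mplus M) = ediv (W a) (Mplus W).

Definition deviation : 'M[R]_d := ediv (Mplus W) (Mplus M) - const_mx 1.

Let Mplus_gt0 s s' : 0 < Mplus M s s'. Proof. by case: M_adm => _ []. Qed.
Let Wplus_gt0 s s' : 0 < Mplus W s s'. Proof. by case: W_adm => _ []. Qed.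

Lemma emul_deviation a : emul (M a) deviation = W a - M a.
Proof.
have /matrixP cross := ediv_eq_emul (fun i j => lt0r_neq0 (Mplus_gt0 i j))
  (fun i j => lt0r_neq0 (Wplus_gt0 i j)) (ratio_eq a).
apply/matrixP=> s s'; have := cross s s'; rewrite !mxE => cross_ss'.
by rewrite mulrBr mulr1 mulrA cross_ss' mulfK ?lt0r_neq0.
Qed.

Lemma emul_Mplus_deviation : emul (Mplus M) deviation = Mplus W - Mplus M.
Proof.
by apply/matrixP=> s s'; rewrite !mxE mulrBr mulr1 mulrCA divff ?mulr1 ?lt0r_neq0.
Qed.

Lemma deviation_rowsum a s : \sum_(s' < d) M a s s' * deviation s s' = 0.
Proof.
have dev s' : M a s s' * deviation s s' = W a s s' - M a s s'.
  by have /matrixP/(_ s s') := emul_deviation a; rewrite !mxE.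
case: M_adm W_adm => _ [Ms _] [_ [Ws _]].
by rewrite (eq_bigr _ (fun s' _ => dev s')) sumrB Ms Ws subrr.
Qed.

Lemma mnorm1_deviation_le eps :
  (forall a s s', `|W a s s' - M a s s'| <= eps) ->
  mnorm1 deviation <= eps * (k%:R * \sum_s \sum_s' (Mplus M s s')^-1).
Proof.
move=> close; rewrite mulrA mulr_sumr; apply: ler_sum => s _.
rewrite mulr_sumr; apply: ler_sum => s' _.
have dev_ss' : deviation s s' = (Mplus W s s' - Mplus M s s') / Mplus M s s'.
  by rewrite !mxE mulrBl divff ?lt0r_neq0.
have Wplus_sub : Mplus W s s' - Mplus M s s' = \sum_a (W a s s' - M a s s').
  by rewrite !summxE sumrB.
rewrite dev_ss' Wplus_sub normrM normfV (gtr0_norm (Mplus_gt0 s s')).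
rewrite ler_wpM2r ?invr_ge0 ?(ltW (Mplus_gt0 s s')) //.
apply: le_trans (ler_norm_sum _ _ _) _.
apply: (@le_trans _ _ (\sum_(a < k) eps)); first exact: ler_sum.
by rewrite sumr_const card_ord mulr_natr.
Qed.

Lemma La_deviation :
  (forall a, ediv (M a *m Mplus M) (Mplus M *m Mplus M)
             = ediv (W a *m Mplus W) (Mplus W *m Mplus W)) ->
  forall a, La M a deviation = - Qa M a deviation.
Proof.
move=> step2_eq a; apply/eqP; rewrite -addr_eq0; apply/eqP.
have sq_neq0 (Q : 'M[R]_d) : (forall s s', 0 < Q s s') -> forall i j, (Q *m Q) i j != 0.
  by move=> Q_gt0 i j; rewrite lt0r_neq0 ?mulmx_gt0.
rewrite (La_add_Qa (Wa := W a) (Wp := Mplus W)); first last.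
- by rewrite emul_Mplus_deviation addrC subrK.
- by rewrite emul_deviation addrC subrK.
by rewrite (ediv_eq_emul (sq_neq0 _ Mplus_gt0) (sq_neq0 _ Wplus_gt0) (step2_eq a)) subrr.
Qed.

End Deviation.

Lemma quadratic_small_eq0 (R : realFieldType) (x K c : R) :
  0 <= K -> 0 <= c -> 0 <= x ->
  x <= K * x ^+ 2 -> x <= (K * c + 1)^-1 * c -> x = 0.
Proof.
move=> K_ge0 c_ge0 x_ge0 x_quad x_small.
have Kx_lt1 : K * x < 1.
  apply: le_lt_trans (ler_wpM2l K_ge0 x_small) _.
  by rewrite mulrCA mulrC ltr_pdivrMr ?ltr_wpDl ?mulr_ge0 // mul1r ltrDl.
nra.
Qed.

Theorem proposition3 (R : realType) (d k : nat) (hd : (0 < d)%N) (hk : (0 < k)%N)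
  (pi : 'I_k -> 'I_d -> R)
  (hpi_nonneg : forall a s, 0 <= pi a s)
  (hpi_sum : forall s, \sum_(a < k) pi a s = 1)
  (M : 'I_k -> 'M[R]_d)
  (hM : admissible pi M)
  (hrank : forall D : 'M[R]_d, Aprime M D = (0, 0) -> D = 0) :
  exists eps : R, 0 < eps /\
    forall W : 'I_k -> 'M[R]_d,
      admissible pi W ->
      (forall a s s', `|W a s s' - M a s s'| < eps) ->
      (forall a, ediv (M a) (Mplus M) = ediv (W a) (Mplus W)) ->
      (forall a, ediv (M a *m Mplus M) (Mplus M *m Mplus M)
                 = ediv (W a *m Mplus W) (Mplus W *m Mplus W)) ->
      forall a, W a = M a.
Proof.
have [C [C_ge0 C_bound]] := linear_lower_bound (Aprime_vec_linear M)
  (fun D D0 => hrank D (Aprime_vec_eq0 D0)).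
have [K [K_ge0 K_bound]] := Qa_quadratic_bound M.
case: (hM) => _ [_ Mplus_gt0].
pose c0 := k%:R * \sum_s \sum_s' (Mplus M s s')^-1.
have c0_ge0 : 0 <= c0.
  rewrite /c0 mulr_ge0 //; do 2!apply: sumr_ge0 => ? _.
  by rewrite invr_ge0 ltW.
have CK_ge0 : 0 <= C * K := mulr_ge0 C_ge0 K_ge0.
exists (C * K * c0 + 1)^-1; split=> [|W hW close ratio_eq step2_eq a].
  by rewrite invr_gt0 ltr_wpDl // mulr_ge0.
set D := deviation M W.
have N_small : mnorm1 D <= (C * K * c0 + 1)^-1 * c0.
  by apply: (mnorm1_deviation_le hM) => b s s'; apply: ltW.
have N_quad : mnorm1 D <= C * K * mnorm1 D ^+ 2.
  rewrite -mulrA; apply: C_bound; first by rewrite mulr_ge0 ?sqr_ge0.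
  apply: Aprime_vec_entry_le; first by rewrite mulr_ge0 ?sqr_ge0.
    move=> b s s'; rewrite (La_deviation hM hW ratio_eq step2_eq) mxE normrN.
    by apply: K_bound => s1 s2; apply: norm_entry_le_mnorm1.
  exact: (deviation_rowsum hM hW ratio_eq).
have /mnorm1_eq0 D0 := quadratic_small_eq0 CK_ge0 c0_ge0 (mnorm1_ge0 D) N_quad N_small.
by apply/eqP; rewrite -subr_eq0 -(emul_deviation hM hW ratio_eq) -/D D0 emulr0.
Qed.
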